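(* Let $q$ be a prime and $1\le K<N$ with $q^K>2$, and let $M=q^K$. Let $G$ ($K\times N$) and $\mathbf{v}\in\mathbb{F}_q^N$ have independent uniformly distributed entries in $\mathbb{F}_q$, and for each message index $j\in\{0,\dots,M-1\}$ let $\mathbf{x}_j=\mathbf{u}_jG+\mathbf{v}$, where $\mathbf{u}_j\in\mathbb{F}_q^K$ is the $q$-ary representation of $j$. Let $P_N(\mathbf{y}\mid\mathbf{x})$ be a channel transition probability from inputs in $\mathbb{F}_q^N$ to outputs in a finite set, and for input $\mathbf{x}$ and output $\mathbf{y}$ let $A(\mathbf{x},\mathbf{y})=\{\mathbf{x}': P_N(\mathbf{y}\mid\mathbf{x}')\ge P_N(\mathbf{y}\mid\mathbf{x})\}$. Fix an index $m$, a value $\mathbf{x}_m$ of its codeword and an output $\mathbf{y}$; for $j\ne m$ let $A_j(\mathbf{x}_m,\mathbf{y})$ be the event $\{\mathbf{x}_j\in A(\mathbf{x}_m,\mathbf{y})\}$, with probabilities over the ensemble conditioned on the codeword of index $m$ being $\mathbf{x}_m$, and let $\alpha=\Pr(A_{m'}(\mathbf{x}_m,\mathbf{y}))$ for any $m'\neq m$ (this does not depend on $m'$). Then for every constant $\rho\ge1$, $$\frac{(M-1)\alpha}{q}-[(M-1)\alpha]^\rho\le\Pr\Big(\bigcup_{m'\ne m}A_{m'}(\mathbf{x}_m,\mathbf{y})\Big)\le (M-1)\alpha.$$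
   Context: All vector operations are componentwise mod $q$. *)

From HB Require Import structures.
From mathcomp Require Import all_boot all_order all_algebra.
From mathcomp Require Import all_classical all_reals all_analysis.
Set Implicit Arguments. Unset Strict Implicit. Unset Printing Implicit Defensive.
Import Order.TTheory GRing.Theory Num.Theory.
Local Open Scope ring_scope.

(* The random ensemble: a pair (G, v) with G : K x N matrix and v : row vector,
   uniformly distributed over the finite set of all such pairs. *)
Definition ensemble (q K N : nat) : finType :=
  ('M['F_q]_(K, N) * 'rV['F_q]_N)%type.

Definition digits_row (q K j : nat) : 'rV['F_q]_K :=
  \row_(i < K) (((j %/ q ^ i) %% q)%N)%:R.

Definition codeword (q K N j : nat) (Gv : ensemble q K N) : 'rV['F_q]_N :=
  digits_row q K j *m Gv.1 + Gv.2.

(* A(x, y) = { x' : P(y|x') >= P(y|x) }, with P x y standing for P_N(y|x). *)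
Definition Aset (R : realType) (q N : nat) (Y : finType)
  (P : 'rV['F_q]_N -> Y -> R) (x : 'rV['F_q]_N) (y : Y) : pred 'rV['F_q]_N :=
  [pred x' | P x y <= P x' y].

Definition cond_prob (R : realType) (q K N m : nat) (xm : 'rV['F_q]_N)
  (E : pred (ensemble q K N)) : R :=
  (#|[set Gv : ensemble q K N | (codeword m Gv == xm) && E Gv]|%:R
   / #|[set Gv : ensemble q K N | codeword m Gv == xm]|%:R).
Arguments cond_prob R q K N m xm E : clear implicits.
Arguments codeword q K N j Gv : clear implicits.

From HB Require Import structures.
From mathcomp Require Import all_boot all_order all_algebra.
From mathcomp Require Import all_classical all_reals all_analysis.
From mathcomp Require Import zify lra.
Import Order.TTheory GRing.Theory Num.Theory.
Local Open Scope ring_scope.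
Set Implicit Arguments. Unset Strict Implicit. Unset Printing Implicit Defensive.

(* Conditioned on x_m = xm, the offset v is determined by G and
   x_j = xm + (u_j - u_m) G, where u_j - u_m runs over the nonzero vectors of
   F_q^K as j runs over the indices j <> m.  For d <> 0 the row d G is uniform,
   so every event A_j has probability alpha = |S| / q^N with S = A(xm, y) - xm,
   and the union bound gives the upper estimate.  For the lower one, keep only
   the L >= (q^K - 1) / (q - 1) normalized vectors (first nonzero coordinate 1):
   any two are linearly independent, so their events are pairwise independent,
   and the second Bonferroni inequality gives Pr(union) >= x - x^2 / 2 with
   x = L alpha.  This is at least (M - 1) alpha / q when (M - 1) alpha < 1;
   otherwise the power term alone makes the lower bound nonpositive. *)

Lemma sum_pairs_indicator (I : finType) (A : pred I) (e : I -> bool) :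
  (\sum_(i in A) e i + \sum_(i in A) \sum_(j in A | j != i) (e i && e j)
   = (\sum_(i in A) e i) ^ 2)%N.
Proof.
rewrite expnS expn1 big_distrl -big_split /=; apply: eq_bigr => i Ai.
rewrite big_distrr [in RHS](bigD1 i) //=; congr (_ + _)%N; first by case: (e i).
by apply: eq_bigr => j _; rewrite mulnb.
Qed.

Section UniformProbability.
Variables (R : numFieldType) (T : finType).

Definition pr (E : pred T) : R := #|E|%:R / #|T|%:R.

Lemma card_predE (E : pred T) : #|E| = (\sum_x E x)%N.
Proof.
rewrite -sum1_card big_mkcond; apply: eq_bigr => x _.
by rewrite unfold_in; case: (E x).
Qed.

Lemma prE (E : pred T) : pr E = (\sum_x (E x : nat))%:R / #|T|%:R.
Proof. by rewrite /pr card_predE. Qed.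

Lemma pr_ge0 (E : pred T) : 0 <= pr E.
Proof. by rewrite divr_ge0. Qed.

Lemma eq_pr (E E' : pred T) : E =i E' -> pr E = pr E'.
Proof. by move=> eqEE'; rewrite /pr (eq_card eqEE'). Qed.

Lemma pr_le (E E' : pred T) : {subset E <= E'} -> pr E <= pr E'.
Proof.
move=> sEE'; rewrite ler_wpM2r ?invr_ge0 // ler_nat.
by apply/subset_leq_card/fintype.subsetP.
Qed.

Lemma sum_prE (I : finType) (P : pred I) (E : I -> pred T) :
  \sum_(i | P i) pr (E i) = (\sum_x \sum_(i | P i) (E i x : nat))%N%:R / #|T|%:R.
Proof.
rewrite exchange_big /= natr_sum mulr_suml; apply: eq_bigr => i _.
by rewrite prE.
Qed.

Variables (I : finType) (A : pred I) (E : I -> pred T).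

Lemma pr_bigcup_le : pr [pred x | [exists i in A, E i x]] <= \sum_(i in A) pr (E i).
Proof.
rewrite prE sum_prE ler_wpM2r ?invr_ge0 // ler_nat leq_sum // => x _ /=.
case: existsP => [[i /andP[Ai Eix]]|//].
by rewrite (bigD1 i) //= Eix.
Qed.

Lemma pr_bigcup_ge :
  2 * \sum_(i in A) pr (E i) <=
  2 * pr [pred x | [exists i in A, E i x]] +
  \sum_(i in A) \sum_(j in A | j != i) pr [pred x | E i x && E j x].
Proof.
have -> : \sum_(i in A) \sum_(j in A | j != i) pr [pred x | E i x && E j x] =
          (\sum_x \sum_(i in A) \sum_(j in A | j != i) (E i x && E j x : nat))%N%:R
          / #|T|%:R.
  rewrite [in RHS]exchange_big natr_sum mulr_suml; apply: eq_bigr => i _.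
  exact: sum_prE.
rewrite sum_prE prE !mulrA -mulrDl ler_wpM2r ?invr_ge0 //.
rewrite -!natrM -natrD ler_nat !big_distrr -big_split /= leq_sum // => x _.
have := sum_pairs_indicator A (E ^~ x).
case: existsP => [[i /andP[Ai Eix]]|/= nE].
- rewrite (bigD1 i Ai) /= Eix.
  set n := (\sum_(j in A | j != i) _)%N; set p := (\sum_(j in A) _)%N; nia.
- rewrite big1 ?muln0 // => i Ai.
  by case: (boolP (E i x)) => // Eix; case: nE; exists i; rewrite Ai Eix.
Qed.

End UniformProbability.

Lemma card_preim_uniform_fibers (U V : finType) (f : U -> V) k (P : pred V) :
  (forall v, #|[pred u | f u == v]| = k) -> #|[pred u | P (f u)]| = (#|P| * k)%N.
Proof.
move=> fiberE; rewrite !card_predE (partition_big f predT) //= big_distrl /=.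
apply: eq_bigr => v _; rewrite -(fiberE v) card_predE big_distrr /= big_mkcond /=.
by apply: eq_bigr => u _; case: eqP => [->|]; rewrite ?muln0 ?muln1 ?mulnC.
Qed.

Lemma card_fiber_additive (U V : finZmodType) (f : U -> V) :
  {morph f : a b / a + b} -> forall u0,
  #|[pred u | f u == f u0]| = #|[pred u | f u == 0]|.
Proof.
move=> fD u0.
have fB w : f (w - u0) = f w - f u0 by apply/eqP; rewrite eq_sym subr_eq -fD subrK.
rewrite -(fintype.card_image (addIr u0) [pred u | f u == 0]); apply: eq_card => u.
apply/idP/fintype.imageP => [fu|[w /eqP fw0 ->]]; last by rewrite inE fD fw0 add0r.
by exists (u - u0); rewrite ?subrK // inE fB (eqP fu) subrr.
Qed.

Lemma pr_preim_uniform_fibers (R : numFieldType) (U V : finType) (f : U -> V) k :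
  (0 < k)%N -> (forall v, #|[pred u | f u == v]| = k) ->
  forall S : pred V, pr R [pred u | f u \in S] = pr R S.
Proof.
move=> k_gt0 fiberE S.
have cardU : #|U| = (#|V| * k)%N.
  by rewrite -(card_preim_uniform_fibers predT fiberE); apply: eq_card.
rewrite /pr (card_preim_uniform_fibers _ fiberE) cardU !natrM.
by rewrite -mulf_div divff ?mulr1 // pnatr_eq0 -lt0n.
Qed.

Lemma pr_preim_bij (R : numFieldType) (U V : finType) (f : U -> V) :
  bijective f -> forall S : pred V, pr R [pred u | f u \in S] = pr R S.
Proof.
case=> g fK gK; apply: (@pr_preim_uniform_fibers R U V f 1) => // v.
rewrite -(card1 (g v)); apply: eq_card => u; rewrite !inE.
by apply/eqP/eqP => [<-|->]; rewrite ?fK ?gK.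
Qed.

Lemma pr_preim_additive (R : numFieldType) (U V : finZmodType) (f : U -> V) :
  {morph f : a b / a + b} -> (forall v, exists u, f u = v) ->
  forall S : pred V, pr R [pred u | f u \in S] = pr R S.
Proof.
move=> fD fsurj; apply: (@pr_preim_uniform_fibers R U V f #|[pred u : U | f u == 0]|).
  have f0 : f 0 = 0 by apply: (addrI (f 0)); rewrite -fD !addr0.
  by apply/card_gt0P; exists 0; rewrite inE f0.
by move=> v; have [u0 <-] := fsurj v; exact: card_fiber_additive.
Qed.

Lemma pr_predX (R : numFieldType) (T1 T2 : finType) (E1 : pred T1) (E2 : pred T2) :
  pr R [pred p : T1 * T2 | E1 p.1 && E2 p.2] = pr R E1 * pr R E2.
Proof.
have cardX : #|[pred p : T1 * T2 | E1 p.1 && E2 p.2]| = (#|E1| * #|E2|)%N.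
  by rewrite -(cardsE E1) -(cardsE E2) -cardsX; apply: eq_card => -[x1 x2]; rewrite !inE.
by rewrite /pr cardX card_prod !natrM mulf_div.
Qed.

Section RandomLinearMap.
Variables (F : finFieldType) (K N : nat).

Lemma row_free_mulmx_surj k (D : 'M[F]_(k, K)) :
  row_free D -> forall Z : 'M[F]_(k, N), exists G, D *m G = Z.
Proof. by case/row_freeP => B DB Z; exists (B *m Z); rewrite mulmxA DB mul1mx. Qed.

Lemma pr_mulmx_row_free (R : numFieldType) k (D : 'M[F]_(k, K)) (S : pred 'M[F]_(k, N)) :
  row_free D -> pr R [pred G : 'M[F]_(K, N) | D *m G \in S] = pr R S.
Proof.
move=> freeD; apply: pr_preim_additive; first exact: mulmxDr.
exact: row_free_mulmx_surj.
Qed.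

Lemma pr_mulmx_row (R : numFieldType) (d : 'rV[F]_K) (S : pred 'rV[F]_N) :
  d != 0 -> pr R [pred G : 'M[F]_(K, N) | d *m G \in S] = pr R S.
Proof. by move=> d_neq0; apply: pr_mulmx_row_free; rewrite /row_free rank_rV d_neq0. Qed.

Lemma pr_mulmx_row_pair (R : numFieldType) (d d' : 'rV[F]_K) (S : pred 'rV[F]_N) :
  row_free (col_mx d d') ->
  pr R [pred G : 'M[F]_(K, N) | (d *m G \in S) && (d' *m G \in S)] = pr R S ^+ 2.
Proof.
move=> free_dd'; pose split_rows (Z : 'M[F]_(1 + 1, N)) := (usubmx Z, dsubmx Z).
have split_bij : bijective split_rows.
  exists (fun z => col_mx z.1 z.2) => [Z|[z z']];
  by rewrite /split_rows ?vsubmxK ?col_mxKu ?col_mxKd.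
rewrite expr2 -pr_predX -(pr_preim_bij R split_bij) -(pr_mulmx_row_free R _ free_dd').
rewrite /pr; congr (_%:R / _); apply: eq_card => G.
by rewrite !inE /split_rows mul_col_mx col_mxKu col_mxKd.
Qed.

End RandomLinearMap.

Section NormalizedRows.
Variables (F : fieldType) (K : nat).

(* One representative of each line of F^K. *)
Definition normalized (f : 'rV[F]_K) :=
  [exists i : 'I_K, (f 0 i == 1) && [forall k : 'I_K, (k < i)%N ==> (f 0 k == 0)]].

Lemma normalized_neq0 f : normalized f -> f != 0.
Proof.
case/existsP => i /andP[/eqP fi1 _]; apply: contra_eq_neq fi1 => ->.
by rewrite mxE eq_sym oner_neq0.
Qed.

Lemma normalized_indep f g a b : normalized f -> normalized g -> f != g ->
  a *: f + b *: g = 0 -> a = 0 /\ b = 0.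
Proof.
case/existsP => i /andP[/eqP fi /forallP f0]; case/existsP => j /andP[/eqP gj /forallP g0].
move=> fg abfg; have coord k : a * f 0 k + b * g 0 k = 0.
  by have := congr1 (fun h : 'rV[F]_K => h 0 k) abfg; rewrite !mxE.
case: (ltngtP i j) => [ij|ji|/val_inj eij].
- have a0 : a = 0 by have := coord i; rewrite fi (eqP (implyP (g0 i) ij)) mulr1 mulr0 addr0.
  by split=> //; have := coord j; rewrite a0 gj mul0r add0r mulr1.
- have b0 : b = 0 by have := coord j; rewrite gj (eqP (implyP (f0 j) ji)) mulr1 mulr0 add0r.
  by split=> //; have := coord i; rewrite b0 fi mul0r addr0 mulr1.
- subst j; have bE : b = - a by apply/eqP; rewrite -addr_eq0 addrC -(coord i) fi gj !mulr1.
  move: abfg; rewrite bE scaleNr -scalerBr => /eqP; rewrite scaler_eq0 subr_eq0 (negbTE fg).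
  by rewrite orbF => /eqP ->; rewrite oppr0.
Qed.

Lemma row_free_normalized f g : normalized f -> normalized g -> f != g ->
  row_free (col_mx f g).
Proof.
move=> nf ng fg; apply: inj_row_free => v.
rewrite -[v]hsubmxK mul_row_col (mx11_scalar (lsubmx v)) (mx11_scalar (rsubmx v)).
rewrite !mul_scalar_mx => /(normalized_indep nf ng fg) [-> ->].
by apply/matrixP => i j; rewrite !mxE; case: fintype.split => k; rewrite mxE mul0rn.
Qed.

Lemma normalized_decomp d : d != 0 ->
  exists2 c, c != 0 & exists2 f, normalized f & d = c *: f.
Proof.
move=> d_neq0; have [i0 di0] : exists i, d 0 i != 0.
  apply/existsP; apply: contraNT d_neq0 => /existsPn d0; apply/eqP/rowP => i.
  by rewrite mxE; apply/eqP/negPn.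
case: (@arg_minnP _ i0 (fun i => d 0 i != 0) val di0) => i di min_i.
exists (d 0 i) => //; exists ((d 0 i)^-1 *: d); last by rewrite scalerA divff ?scale1r.
apply/existsP; exists i; rewrite mxE mulVf // eqxx /=.
apply/forallP => k; apply/implyP => ki; rewrite mxE.
by case: (eqVneq (d 0 k) 0) => [->|/min_i]; rewrite ?mulr0 // leqNgt ki.
Qed.

End NormalizedRows.

Lemma card_nonzero_rows_le (F : finFieldType) K :
  ((#|F| ^ K).-1 <= #|F|.-1 * #|[pred f : 'rV[F]_K | normalized f]|)%N.
Proof.
rewrite -[K in (#|F| ^ K)%N]mul1n -card_mx -(cardC1 (0 : 'rV[F]_K)) -(cardC1 (0 : F)).
rewrite -(cardsE (predC1 0)) -(cardsE (predC1 0)) -(cardsE [pred f | normalized f]) -cardsX.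
apply: leq_trans (leq_imset_card (fun p : F * 'rV[F]_K => p.1 *: p.2) _).
apply/subset_leq_card/fintype.subsetP => d; rewrite !inE => d_neq0.
have [c c_neq0 [f nf ->]] := normalized_decomp d_neq0.
by apply/imsetP; exists (c, f); rewrite ?inE ?c_neq0.
Qed.

Lemma lower_bound_from_quadratic (R : realType) (t a x c rho : R) :
  1 <= t -> 0 <= x -> x <= a -> a <= t * x -> 2 * x - x ^+ 2 <= 2 * c -> 0 <= c ->
  1 <= rho -> a / (t + 1) - a `^ rho <= c.
Proof.
move=> t_ge1 x_ge0 xa atx quad c_ge0 rho_ge1.
have a_ge0 : 0 <= a by apply: le_trans xa.
have a_le : a / (t + 1) <= a by rewrite ler_pdivrMr ?ler_peMr; lra.
have [a_ge1|a_lt1] := lerP 1 a; first by have := le1r_powR a_ge1 rho_ge1; lra.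
suff : a / (t + 1) <= c by have := powR_ge0 a rho; lra.
rewrite ler_pdivrMr; last by lra.
(* x - x^2/2 increases on [0, 1] and x >= a / t, so compare with its value at a / t. *)
have h1 : 2 * t * a - a ^+ 2 <= t ^+ 2 * (2 * x - x ^+ 2).
  have : 0 <= (t * x - a) * (2 * t - t * x - a) by apply: mulr_ge0; nra.
  nra.
have h2 : 2 * a * t ^+ 2 <= (t + 1) * (2 * t * a - a ^+ 2).
  have : 0 <= a * (2 * t - (t + 1) * a) by apply: mulr_ge0; nra.
  nra.
have : 2 * a * t ^+ 2 <= (t + 1) * (2 * x - x ^+ 2) * t ^+ 2 by nra.
rewrite ler_pM2r; nra.
Qed.

Section UnionOverNonzeroRows.
Variables (R : realType) (F : finFieldType) (K N : nat) (S : pred 'rV[F]_N).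

Lemma pr_union_nonzero_le :
  pr R [pred G : 'M[F]_(K, N) | [exists d, (d != 0) && (d *m G \in S)]]
  <= (#|F| ^ K).-1%:R * pr R S.
Proof.
apply: le_trans (pr_bigcup_le R (predC1 0) (fun d G => d *m G \in S)) _.
rewrite (eq_bigr (fun _ => pr R S)) => [|d d_neq0]; last exact: pr_mulmx_row.
by rewrite sumr_const cardC1 card_mx mul1n mulr_natl.
Qed.

Lemma pr_union_nonzero_ge rho : 1 <= rho ->
  (#|F| ^ K).-1%:R * pr R S / #|F|%:R - ((#|F| ^ K).-1%:R * pr R S) `^ rho
  <= pr R [pred G : 'M[F]_(K, N) | [exists d, (d != 0) && (d *m G \in S)]].
Proof.
move=> rho_ge1; set alpha := pr R S.
pose A := [pred f : 'rV[F]_K | normalized f]; set L := #|A|.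
have sum1 : \sum_(f in A) pr R [pred G : 'M[F]_(K, N) | f *m G \in S] = L%:R * alpha.
  rewrite (eq_bigr (fun _ => alpha)) => [|f nf]; last exact/pr_mulmx_row/normalized_neq0.
  by rewrite sumr_const mulr_natl.
have sum2 : \sum_(f in A) \sum_(g in A | g != f)
    pr R [pred G : 'M[F]_(K, N) | (f *m G \in S) && (g *m G \in S)]
    = L%:R * (L.-1%:R * alpha ^+ 2).
  rewrite (eq_bigr (fun _ => L.-1%:R * alpha ^+ 2)) => [|f nf].
    by rewrite sumr_const [RHS]mulr_natl.
  rewrite (eq_bigr (fun _ => alpha ^+ 2)) => [|g /andP[ng gf]].
    rewrite sumr_const [RHS]mulr_natl; congr (_ *+ _).
    rewrite /L [in RHS](cardD1 f) nf add1n /=; apply: eq_card => g.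
    by rewrite unfold_in !inE andbC.
  by apply: pr_mulmx_row_pair; apply: row_free_normalized; rewrite // eq_sym.
have := pr_bigcup_ge R A (fun f G => f *m G \in S); rewrite sum1 sum2.
set c := pr R _ => bonferroni.
have alpha_ge0 : 0 <= alpha := pr_ge0 R S.
have quad : 2 * (L%:R * alpha) - (L%:R * alpha) ^+ 2 <= 2 * c.
  have : L.-1%:R <= L%:R :> R by rewrite ler_nat leq_pred.
  have : 0 <= L%:R * alpha ^+ 2 :> R by rewrite mulr_ge0 ?exprn_ge0.
  nra.
have F_gt1 := card_finNzRing_gt1 F.
have cardF : #|F|%:R = #|F|.-1%:R + 1 :> R by rewrite natr1 prednK // ltnW.
have L_le : (L <= (#|F| ^ K).-1)%N.
  rewrite -[K in (#|F| ^ K)%N]mul1n -card_mx -(cardC1 (0 : 'rV[F]_K)).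
  by apply/subset_leq_card/fintype.subsetP => f; rewrite !inE; exact: normalized_neq0.
apply: le_trans (_ : c <= _); last first.
  apply: pr_le => G /existsP[f /andP[nf fG]].
  by apply/existsP; exists f; rewrite normalized_neq0.
rewrite cardF; apply: lower_bound_from_quadratic quad (pr_ge0 _ _) rho_ge1.
- by rewrite ler1n -ltnS prednK // ltnW.
- by rewrite mulr_ge0.
- by rewrite ler_wpM2r // ler_nat.
- by rewrite (mulrA #|F|.-1%:R) -natrM ler_wpM2r // ler_nat card_nonzero_rows_le.
Qed.

End UnionOverNonzeroRows.

Lemma card_graph (A B : finType) (g : A -> B) (E : pred (A * B)) :
  #|[pred p : A * B | (p.2 == g p.1) && E p]| = #|[pred a | E (a, g a)]|.
Proof.
have graph_inj : injective (fun a => (a, g a)) by move=> a a' [].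
rewrite -(fintype.card_image graph_inj); apply: eq_card => -[a b].
apply/idP/fintype.imageP => [/andP[/eqP /= -> Eab]|[a' Ea' [-> ->]]]; last by rewrite inE eqxx.
by exists a.
Qed.

Lemma cond_probE (R : realType) q K N m xm (E : pred (ensemble q K N)) :
  cond_prob R q K N m xm E =
  pr R [pred G : 'M['F_q]_(K, N) | E (G, xm - digits_row q K m *m G)].
Proof.
have codewordE (Gv : ensemble q K N) :
    (codeword q K N m Gv == xm) = (Gv.2 == xm - digits_row q K m *m Gv.1).
  by rewrite /codeword [RHS]eq_sym subr_eq eq_sym addrC.
rewrite /cond_prob /pr; congr (_%:R / _%:R).
  rewrite -(card_graph (fun G => xm - digits_row q K m *m G)).
  by apply: eq_card => Gv; rewrite !inE codewordE.
rewrite -[RHS](card_graph (fun G => xm - digits_row q K m *m G) predT).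
by apply: eq_card => Gv; rewrite !inE codewordE andbT.
Qed.

Lemma eq_from_digits q K j k : (0 < q)%N -> (j < q ^ K)%N -> (k < q ^ K)%N ->
  (forall i, i < K -> j %/ q ^ i %% q = k %/ q ^ i %% q)%N -> j = k.
Proof.
move=> q_gt0; elim: K j k => [|K IHK] j k.
  by rewrite expn0 !ltnS !leqn0 => /eqP -> /eqP ->.
move=> j_lt k_lt eq_digits; rewrite (divn_eq j q) (divn_eq k q).
have := eq_digits 0%N isT; rewrite expn0 !divn1 => ->.
congr (_ * q + _)%N; apply: IHK; rewrite ?ltn_divLR -?expnSr //.
by move=> i i_lt; rewrite -!divnMA -expnS; exact: eq_digits.
Qed.

Lemma digits_row_bij q K : prime q -> bijective (fun j : 'I_(q ^ K) => digits_row q K j).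
Proof.
move=> q_prime; apply: inj_card_bij; last by rewrite card_mx card_Fp // mul1n card_ord.
move=> j k /rowP eq_jk; apply/val_inj.
apply: (eq_from_digits (prime_gt0 q_prime) (ltn_ord j) (ltn_ord k)) => i i_lt.
by have := congr1 val (eq_jk (Ordinal i_lt)); rewrite !mxE /= !val_Fp_nat // !modn_mod.
Qed.

Lemma exists_message_diff q K (m : 'I_(q ^ K)) (P : pred 'rV['F_q]_K) : prime q ->
  [exists j : 'I_(q ^ K), (j != m) && P (digits_row q K j - digits_row q K m)] =
  [exists d, (d != 0) && P d].
Proof.
move=> /(digits_row_bij K) [idx digitsK idxK].
apply/existsP/existsP => [[j /andP[jm Pj]]|[d /andP[d_neq0 Pd]]].
  exists (digits_row q K j - digits_row q K m); rewrite Pj andbT subr_eq0.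
  by apply: contra jm => /eqP/(can_inj digitsK) ->.
exists (idx (digits_row q K m + d)); rewrite idxK [_ + d]addrC addrK Pd andbT.
apply: contra d_neq0 => /eqP/(congr1 (fun j : 'I_(q ^ K) => digits_row q K j)).
by rewrite idxK -[X in _ = X]add0r => /addIr ->.
Qed.

Theorem lemma2 (R : realType) (q K N : nat) (Y : finType)
  (P : 'rV['F_q]_N -> Y -> R)
  (hq : prime q) (hK1 : (1 <= K)%N) (hKN : (K < N)%N) (hM : (2 < q ^ K)%N)
  (hP0 : forall x y, 0 <= P x y) (hP1 : forall x, \sum_(y : Y) P x y = 1)
  (m : 'I_(q ^ K)) (xm : 'rV['F_q]_N) (y : Y)
  (m' : 'I_(q ^ K)) (hm' : m' != m)
  (rho : R) (hrho : 1 <= rho) :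
  let M := (q ^ K)%N in
  let alpha := cond_prob R q K N m xm
                 (fun Gv : ensemble q K N => codeword q K N m' Gv \in Aset P xm y) in
  let pU := cond_prob R q K N m xm
                 (fun Gv : ensemble q K N => [exists j : 'I_(q ^ K),
                               (j != m) && (codeword q K N j Gv \in Aset P xm y)]) in
  ((M - 1)%N%:R * alpha / q%:R - powR ((M - 1)%N%:R * alpha) rho <= pU)
  /\ (pU <= (M - 1)%N%:R * alpha).
Proof.
move=> M alpha pU; set u := digits_row q K.
pose S := [pred z | xm + z \in Aset P xm y].
have codewordE j G : codeword q K N j (G, xm - u m *m G) = xm + (u j - u m) *m G.
  by rewrite /codeword mulmxBl addrCA.
have alphaE : alpha = pr R S.
  rewrite /alpha cond_probE -(@pr_mulmx_row _ K N R (u m' - u m) S); last first.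
    by rewrite subr_eq0 (bij_eq (digits_row_bij K hq)).
  by apply: eq_pr => G; rewrite !inE codewordE.
have pUE : pU = pr R [pred G : 'M['F_q]_(K, N) | [exists d, (d != 0) && (d *m G \in S)]].
  rewrite /pU cond_probE; apply: eq_pr => G; rewrite !inE -(exists_message_diff m _ hq).
  by apply: eq_existsb => j; rewrite codewordE.
have M1E : (M - 1)%N = (#|'F_q| ^ K).-1 by rewrite card_Fp // subn1.
rewrite alphaE pUE M1E; split.
- by have := @pr_union_nonzero_ge R _ K N S rho hrho; rewrite card_Fp.
- exact: pr_union_nonzero_le.
Qed.
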